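(* Let $d\in\mathbb{N}$, $G=\mathbb{Z}_{12d+4}$, $H=\{0,3d+1,6d+2,9d+3\}$ and $K=\{0,6d+2\}$. Let $a_1+H,\dots,a_{3d}+H$ be the cosets of $H$ in $G$ other than $H$ itself. Form a family $S'$ of $6d$ two-element sets as follows: for each $1\le i\le d$, split $a_i+H$ into the two cosets $a_i+K$ and $b_i+K$ of $K$, where $b_i=a_i+(3d+1)$; for each $d+1\le j\le 3d$, split $a_j+H$ into two disjoint subsets $B_j$ and $C_j$, each of the form $\{x,y\}$ with $y-x=3d+1$. Then $S'$ is a $(12d+4,6d,2,0,4d)$-DPDF and a $(12d+4,6d,2,12d-4,8d)$-EPDF in $G$.
   Context: In an additive group $G$ with identity $0$, let $G^*=G\setminus\{0\}$. For $D\subseteq G$, $\Delta(D)$ is the multiset $\{x-y:x,y\in D,x\ne y\}$; for $D_1,D_2\subseteq G$, $\Delta(D_1,D_2)$ is the multiset $\{x-y:x\in D_1,y\in D_2\}$. For a family $A=\{A_1,\dots,A_s\}$ of pairwise disjoint subsets, ${\rm Int}(A)=\bigcup_i\Delta(A_i)$ and ${\rm Ext}(A)=\bigcup_{i\ne j}\Delta(A_i,A_j)$ (multiset unions). For $|G|=v$, a $(v,s,k,\lambda,\mu)$-DPDF is a family of $s$ pairwise disjoint $k$-subsets of $G^*$ with union $S$ such that ${\rm Int}(A)$ contains each element of $S$ exactly $\lambda$ times and each element of $G\setminus(S\cup\{0\})$ exactly $\mu$ times; a $(v,s,k,\lambda,\mu)$-EPDF is defined the same way using ${\rm Ext}(A)$.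 *)

From HB Require Import structures.
From mathcomp Require Import all_boot all_order all_algebra.
Set Implicit Arguments. Unset Strict Implicit. Unset Printing Implicit Defensive.
Import GRing.Theory.
Local Open Scope ring_scope.

(* A family A = {A_1,...,A_s} of subsets of a finite additive group G is
   represented as a sequence of sets (A_i = nth set0 A i). *)

Section PDF.
Variable G : finZmodType.

Definition coset (a : G) (H : {set G}) : {set G} := [set a + h | h in H].

Definition fam_union (A : seq {set G}) : {set G} := \bigcup_(X <- A) X.

Definition mult_Delta (X : {set G}) (g : G) : nat :=
  #|[set p in setX X X | (p.1 != p.2) && (p.1 - p.2 == g)]|.

Definition mult_Delta2 (X Y : {set G}) (g : G) : nat :=
  #|[set p in setX X Y | p.1 - p.2 == g]|.

Definition mult_Int (A : seq {set G}) (g : G) : nat :=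
  (\sum_(X <- A) mult_Delta X g)%N.

Definition mult_Ext (A : seq {set G}) (g : G) : nat :=
  (\sum_(i < size A) \sum_(j < size A | i != j)
      mult_Delta2 (nth set0 A i) (nth set0 A j) g)%N.

Definition is_PF (v s k : nat) (A : seq {set G}) : Prop :=
  [/\ #|G| = v, size A = s,
      (forall i, (i < s)%N -> #|nth set0 A i| = k /\ 0 \notin nth set0 A i) &
      (forall i j, (i < s)%N -> (j < s)%N -> i != j ->
          [disjoint nth set0 A i & nth set0 A j])].

Definition is_DPDF (v s k lam mu : nat) (A : seq {set G}) : Prop :=
  [/\ is_PF v s k A,
      (forall g, g \in fam_union A -> mult_Int A g = lam) &
      (forall g, g != 0 -> g \notin fam_union A -> mult_Int A g = mu)].

Definition is_EPDF (v s k lam mu : nat) (A : seq {set G}) : Prop :=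
  [/\ is_PF v s k A,
      (forall g, g \in fam_union A -> mult_Ext A g = lam) &
      (forall g, g != 0 -> g \notin fam_union A -> mult_Ext A g = mu)].

End PDF.

From HB Require Import structures.
From mathcomp Require Import all_boot all_order all_algebra zify.
Set Implicit Arguments. Unset Strict Implicit. Unset Printing Implicit Defensive.
Import GRing.Theory.
Local Open Scope ring_scope.

(* Write t = 3d+1, so that H = {0, t, 2t, 3t} is a subgroup of order 4 and
   K = {0, 2t}. Every member of S' is a pair {x, x + s}, with s = 2t for the 2d
   cosets of K and s = t for the 4d sets B_j, C_j, and together they split each
   of the 3d cosets of H other than H into two halves: S' partitions G \ H.
   A pair {x, x + s} contributes s and -s to Int, so Int is 4d at t, 2t = -2t
   and 3t = -t, and 0 off H. Since the members partition G \ H, Ext + Int at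
   g <> 0 counts the y with y and y - g both outside H, i.e.
   |G| - |H u (g + H)|, which is 12d for g in H and 12d - 4 otherwise. *)

Lemma sum_mem_card (T : finType) (A : {pred T}) : (\sum_x (x \in A))%N = #|A|.
Proof. by rewrite -sum1_card [RHS]big_mkcond; apply: eq_bigr => x _; case: (x \in A). Qed.

Lemma mem_setU_disjoint (T : finType) (P Q : {set T}) x : [disjoint P & Q] ->
  (x \in P :|: Q) = ((x \in P) + (x \in Q))%N :> nat.
Proof. by move=> PQ; rewrite in_setU; case: (boolP (x \in P)) => // /(disjointFr PQ) ->. Qed.

Section Multiplicities.
Variable G : finZmodType.
Implicit Types (A : seq {set G}) (X Y : {set G}) (g x y s : G).

Definition mult_cover A y : nat := (\sum_(X <- A) (y \in X))%N.

Lemma mult_coverE A y : mult_cover A y = (\sum_(i < size A) (y \in nth set0 A i))%N.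
Proof. by rewrite /mult_cover (big_nth set0) big_mkord. Qed.

Lemma mem_fam_union A y : (y \in fam_union A) = (0 < mult_cover A y)%N.
Proof.
elim: A => [|X A IH]; first by rewrite /fam_union /mult_cover !big_nil inE.
by rewrite /fam_union /mult_cover !big_cons in_setU -/(fam_union A) IH addn_gt0 lt0b.
Qed.

Lemma mult_cover_gt0 A X y : X \in A -> y \in X -> (0 < mult_cover A y)%N.
Proof.
by move=> XA yX; rewrite -mem_fam_union /fam_union bigcup_seq; apply/bigcupP; exists X.
Qed.

Lemma disjoint_nth_mult_cover A i j :
  (forall y, mult_cover A y <= 1)%N -> (i < size A)%N -> (j < size A)%N -> i != j ->
  [disjoint nth set0 A i & nth set0 A j].
Proof.
move=> le1 ltiA ltjA neqij; apply/pred0P => y /=; apply/negbTE/andP => -[yi yj].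
have := le1 y; rewrite mult_coverE (bigD1 (Ordinal ltiA)) //= yi.
rewrite (bigD1 (Ordinal ltjA)) /=; last by rewrite -val_eqE /= eq_sym.
by rewrite yj.
Qed.

Lemma mult_Delta2E X Y g :
  mult_Delta2 X Y g = (\sum_y ((y \in X) * ((y - g)%R \in Y)))%N.
Proof.
rewrite /mult_Delta2.
have -> : [set p in setX X Y | p.1 - p.2 == g] =
          (fun y => (y, y - g)) @: [set y in X | y - g \in Y].
  apply/setP => -[u v]; rewrite !inE /=; apply/idP/imsetP.
    case/andP => /andP [uX vY] /eqP <-; exists u; last by rewrite opprB addrC subrK.
    by rewrite inE uX opprB addrC subrK.
  by case=> y; rewrite inE => /andP [yX yY] [-> ->]; rewrite yX yY opprB addrC subrK eqxx.
rewrite card_imset; last by move=> y z [].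
rewrite -sum1_card big_mkcond /=; apply: eq_bigr => y _.
by rewrite inE; case: (y \in X); case: (_ \in Y).
Qed.

Lemma mult_DeltaE X g : g != 0 -> mult_Delta X g = mult_Delta2 X X g.
Proof.
move=> g0; apply: eq_card => p; rewrite !inE.
by case: eqP => [->|] //=; rewrite subrr eq_sym (negbTE g0) andbF.
Qed.

Lemma mult_Delta_pair x s g : s != 0 -> g != 0 ->
  mult_Delta [set x; x + s] g = ((g == s) + (g == - s))%N.
Proof.
move=> s0 g0; rewrite mult_DeltaE // mult_Delta2E (bigID [in [set x; x + s]]) /=.
rewrite [X in (_ + X)%N]big1 ?addn0 => [|y /negbTE -> //].
rewrite big_setU1 ?big_set1 /=; last by rewrite inE -subr_eq0 opprD addNKr oppr_eq0.
rewrite !inE !eqxx orbT mul1n.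
have moved z : (z - g == z) = false.
  by rewrite -subr_eq0 addrAC subrr add0r oppr_eq0 (negbTE g0).
have -> : (x - g == x + s) = (g == - s) by rewrite (inj_eq (addrI x)) eqr_oppLR.
have -> : (x + s - g == x) = (g == s).
  by rewrite -subr_eq0 addrAC (addrC x) addrK subr_eq0 eq_sym.
by rewrite !moved orbF mul1n addnC.
Qed.

Lemma mult_Ext_add_Int A g : g != 0 ->
  (mult_Ext A g + mult_Int A g = \sum_y mult_cover A y * mult_cover A (y - g)%R)%N.
Proof.
move=> g0; pose D i j := mult_Delta2 (nth set0 A i) (nth set0 A j) g.
(* Int is the diagonal and Ext the off-diagonal part of the double sum of the D i j. *)
have -> : mult_Int A g = (\sum_(i < size A) D i i)%N.
  by rewrite /mult_Int (big_nth set0) big_mkord; apply: eq_bigr => i _; rewrite mult_DeltaE.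
have -> : (mult_Ext A g + \sum_(i < size A) D i i =
           \sum_(i < size A) \sum_(j < size A) D i j)%N.
  rewrite /mult_Ext -big_split; apply: eq_bigr => i _ /=.
  by rewrite [in RHS](bigD1 i) //= addnC; under eq_bigl do rewrite eq_sym.
under eq_bigr => y _.
  rewrite !mult_coverE big_distrl /=; under eq_bigr do rewrite big_distrr /=.
  over.
rewrite [RHS]exchange_big; apply: eq_bigr => i _.
rewrite [RHS]exchange_big; apply: eq_bigr => j _.
by rewrite /D mult_Delta2E.
Qed.

End Multiplicities.

Lemma card_pair (G : finZmodType) (x s : G) : s != 0 -> #|[set x; x + s]| = 2%N.
Proof. by move=> s0; rewrite cards2 -{1}(addr0 x) (inj_eq (addrI x)) eq_sym s0. Qed.

Section Cosets.
Variables (G : finZmodType) (H : {set G}).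
Hypothesis H_closed : zmod_closed H.
Implicit Types (g x y : G).

Let H0 : 0 \in H. Proof. by case: H_closed. Qed.
Let HB : {in H &, forall u v, u - v \in H}. Proof. by case: H_closed. Qed.
Let HD : {in H &, forall u v, u + v \in H}.
Proof. by move=> u v uH vH; rewrite -[v]opprK HB // -sub0r HB. Qed.

Lemma mem_coset x y : (y \in coset x H) = (y - x \in H).
Proof.
apply/imsetP/idP => [[h hH ->]|yxH]; first by rewrite addrAC subrr add0r.
by exists (y - x); rewrite // addrC subrK.
Qed.

Lemma card_coset x : #|coset x H| = #|H|.
Proof. by rewrite card_imset //; apply: addrI. Qed.

Lemma eq_coset x y : (coset x H == coset y H) = (x - y \in H).
Proof.
apply/eqP/idP => [xy|xyH]; first by rewrite -mem_coset -xy mem_coset subrr.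
apply/setP => z; rewrite !mem_coset; apply/idP/idP => zH.
  by rewrite -(addrNK x z) -addrA HD.
by rewrite -(addrNK y z) -addrA -(opprB x y) HB.
Qed.

Lemma coset_id y : y \in H -> coset y H = H.
Proof.
move=> yH; apply/setP => z; rewrite mem_coset; apply/idP/idP => zH.
  by rewrite -(subrK y z) HD.
by rewrite HB.
Qed.

Lemma coset_mem x y : y \in coset x H -> coset y H = coset x H.
Proof. by rewrite mem_coset -eq_coset => /eqP. Qed.

Lemma disjoint_cosets x y : y - x \notin H -> [disjoint coset x H & coset y H].
Proof.
move=> yxH; apply/pred0P => z /=; apply/negbTE; rewrite !mem_coset.
apply: contra yxH => /andP [zxH zyH].
by rewrite -(subrKA z) addrC -opprB HB // -sub0r HB.
Qed.

Lemma sum_mem_cosets n (a : 'I_n -> G) :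
  #|G| = (n.+1 * #|H|)%N -> (forall i, coset (a i) H != H) ->
  injective (fun i => coset (a i) H) ->
  forall y, (\sum_(i < n) (y \in coset (a i) H))%N = (y \notin H).
Proof.
move=> cardG aH a_inj; pose f y := (\sum_(i < n) (y \in coset (a i) H))%N.
have f_le y : (f y <= (y \notin H))%N.
  case: (pickP (fun i => y \in coset (a i) H)) => [i yi|none]; last first.
    by rewrite /f big1 // => i _; rewrite none.
  rewrite /f (bigD1 i) //= yi big1 ?addn0 => [|j ji].
    by rewrite lt0b; apply: contraNN (aH i) => yH; rewrite -(coset_mem yi) coset_id.
  apply/eqP; rewrite eqb0; apply: contra ji => yj; apply/eqP/a_inj.
  by rewrite /= -(coset_mem yi) -(coset_mem yj).
have sum_f : (\sum_y f y = n * #|H|)%N.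
  rewrite exchange_big /= (eq_bigr (fun _ => #|H|)) => [|i _]; last first.
    by rewrite sum_mem_card card_coset.
  by rewrite sum_nat_const card_ord.
have sum_notH : (\sum_y (y \notin H) = n * #|H|)%N.
  rewrite (eq_bigr (fun y : G => (y \in ~: H) : nat)) => [|y _]; last by rewrite in_setC.
  by apply/eqP; rewrite sum_mem_card -(eqn_add2l #|H|) cardsC cardG mulSn.
(* Each point lies in at most one listed coset, and both sides have the same
   total n * #|H| over G, so they agree pointwise. *)
have : (\sum_y ((y \notin H) - f y) == 0)%N by rewrite sumnB // sum_f sum_notH subnn.
rewrite sum_nat_eq0 => /forallP eq0 y; apply/eqP; rewrite eqn_leq f_le /=.
by rewrite -subn_eq0; apply: (implyP (eq0 y)).
Qed.

Lemma card_setC_cosetU g :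
  #|~: (H :|: coset g H)| = if g \in H then (#|G| - #|H|)%N else (#|G| - #|H|.*2)%N.
Proof.
have -> : #|~: (H :|: coset g H)| = (#|G| - #|H :|: coset g H|)%N.
  by rewrite -(cardsC (H :|: coset g H)) addKn.
case: ifP => [gH|/negbT gH]; first by rewrite coset_id // setUid.
have := @disjoint_cosets 0 g; rewrite subr0 coset_id // => /(_ gH) /disjoint_setI0.
by rewrite cardsU card_coset => ->; rewrite cards0 subn0 addnn.
Qed.

Section Cover.
Variable A : seq {set G}.
Hypothesis A_cover : forall y, mult_cover A y = (y \notin H).

Lemma fam_union_cover : fam_union A = ~: H.
Proof. by apply/setP => y; rewrite mem_fam_union A_cover in_setC lt0b. Qed.

Lemma is_PF_cover k : {in A, forall X : {set G}, #|X| = k} -> is_PF #|G| (size A) k A.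
Proof.
move=> cardA; split => // [i ltiA | i j ltiA ltjA neqij].
  have XA := mem_nth set0 ltiA; split; first exact: cardA.
  by apply/negP => /(mult_cover_gt0 XA); rewrite A_cover H0.
by apply: disjoint_nth_mult_cover => // y; rewrite A_cover leq_b1.
Qed.

Lemma mult_Ext_add_Int_cover g : g != 0 ->
  (mult_Ext A g + mult_Int A g =
     if g \in H then #|G| - #|H| else #|G| - #|H|.*2)%N.
Proof.
move=> g0; rewrite mult_Ext_add_Int // -card_setC_cosetU -sum_mem_card.
by apply: eq_bigr => y _; rewrite !A_cover !inE mem_coset negb_or mulnb.
Qed.

End Cover.

End Cosets.

Lemma coset_pair (G : finZmodType) (x s : G) : coset x [set 0; s] = [set x; x + s].
Proof. by rewrite /coset imsetU1 imset_set1 addr0. Qed.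

Section Order4.
Variables (G : finZmodType) (t : G).
Hypotheses (t4 : t *+ 4 = 0) (t2 : t *+ 2 != 0).

Definition subgroup4 : {set G} := [set 0; t; t *+ 2; t *+ 3].
Definition subgroup2 : {set G} := [set 0; t *+ 2].

Lemma mulrn_mod4 k : t *+ k = t *+ (k %% 4)%N.
Proof. by rewrite {1}(divn_eq k 4) mulrnDr mulnC mulrnA t4 mul0rn add0r. Qed.

Lemma oppr_order4 : - t = t *+ 3.
Proof. by apply/eqP; rewrite eq_sym -subr_eq0 opprK -mulrSr t4. Qed.

Lemma oppr_mulrn2 : - (t *+ 2) = t *+ 2.
Proof. by apply/eqP; rewrite eq_sym -subr_eq0 opprK -mulrnDr t4. Qed.

Lemma order4_neq0 : t != 0.
Proof. by apply: contraNneq t2 => ->; rewrite mul0rn. Qed.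

Lemma mulrn_eq0_order4 k : (t *+ k == 0) = (4 %| k)%N.
Proof.
have t0 := order4_neq0.
rewrite mulrn_mod4 /dvdn; case: (k %% 4)%N (ltn_pmod k (isT : 0 < 4)%N) => [|[|[|[|]]]] //= _.
- by rewrite mulr0n !eqxx.
- by rewrite mulr1n (negbTE t0).
- by rewrite (negbTE t2).
- by rewrite -oppr_order4 oppr_eq0 (negbTE t0).
Qed.

Lemma eq_mulrn_order4 i j : (t *+ i == t *+ j) = (i == j %[mod 4])%N.
Proof.
wlog le_ij : i j / (i <= j)%N.
  by move=> W; case: (leqP i j) => [|/ltnW] /W; rewrite // eq_sym => ->; rewrite eq_sym.
rewrite [RHS]eq_sym eqn_mod_dvd // -mulrn_eq0_order4 -(subnKC le_ij) mulrnDr addKn.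
by rewrite -[X in X == _]addr0 (inj_eq (addrI _)) eq_sym.
Qed.

Lemma subgroup4P y : reflect (exists k, y = t *+ k) (y \in subgroup4).
Proof.
apply: (iffP idP) => [|[k ->]].
  rewrite !inE -!orbA => /or4P[] /eqP ->.
  - by exists 0%N; rewrite mulr0n.
  - by exists 1%N; rewrite mulr1n.
  - by exists 2%N.
  - by exists 3%N.
rewrite mulrn_mod4 !inE.
by case: (k %% 4)%N (ltn_pmod k (isT : 0 < 4)%N) => [|[|[|[|]]]] //= _; rewrite ?eqxx ?orbT.
Qed.

Lemma subgroup4_closed : zmod_closed subgroup4.
Proof.
split; first by rewrite !inE eqxx.
move=> _ _ /subgroup4P[i ->] /subgroup4P[j ->]; apply/subgroup4P; exists (i + 3 * j)%N.
by rewrite mulrnDr mulrnA -oppr_order4 mulNrn.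
Qed.

Lemma card_subgroup4 : #|subgroup4| = 4%N.
Proof.
have -> : #|subgroup4| = #|[seq t *+ k | k <- iota 0 4]|.
  by apply: eq_card => y; rewrite !inE mulr0n mulr1n -!orbA.
apply/card_uniqP; rewrite map_inj_in_uniq ?iota_uniq // => i j.
by rewrite !mem_iota /= => lti4 ltj4 /eqP; rewrite eq_mulrn_order4 !modn_small // => /eqP.
Qed.

Lemma subgroup2_closed : zmod_closed subgroup2.
Proof.
split=> [|_ _ /set2P[]-> /set2P[]->];
  by rewrite ?inE ?subrr ?subr0 ?sub0r ?oppr_mulrn2 ?eqxx ?orbT.
Qed.

Lemma cosetU_subgroup2 x : coset x subgroup2 :|: coset (x + t) subgroup2 = coset x subgroup4.
Proof.
apply/setP => y; rewrite in_setU !mem_coset !inE opprD addrA.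
set z := y - x; rewrite (subr_eq0 z t) (subr_eq z (t *+ 2) t) -mulrSr !orbA; congr (_ || _).
exact: orbAC.
Qed.

Lemma disjoint_cosets_subgroup2 x :
  [disjoint coset x subgroup2 & coset (x + t) subgroup2].
Proof.
apply: (disjoint_cosets subgroup2_closed); rewrite addrAC subrr add0r !inE negb_or.
by rewrite -[t in t == 0]mulr1n -[t in t == _ *+ 2]mulr1n mulrn_eq0_order4 eq_mulrn_order4.
Qed.

Lemma nonzero_subgroup4_count g : g != 0 ->
  ((g == t) + (g == t *+ 2) + (g == t *+ 3))%N = (g \in subgroup4).
Proof.
move=> g0; rewrite !inE (negbTE g0) /= -[t in g == t]mulr1n.
case: (boolP (g == t *+ 1)) => [/eqP->|_]; rewrite ?eq_mulrn_order4 //.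
by case: (boolP (g == t *+ 2)) => [/eqP->|_]; rewrite ?eq_mulrn_order4.
Qed.

End Order4.

Section Construction.
Variables (G : finZmodType) (t : G) (d : nat).
Hypotheses (t4 : t *+ 4 = 0) (t2 : t *+ 2 != 0) (cardG : #|G| = (12 * d + 4)%N).
Variables (a : 'I_(3 * d) -> G) (B C : 'I_(3 * d) -> {set G}).
Let H := subgroup4 t.
Let K := subgroup2 t.
Hypotheses (aH : forall i, coset (a i) H != H) (a_inj : injective (fun i => coset (a i) H)).
Hypothesis BC : forall j : 'I_(3 * d), (d <= j)%N ->
  [/\ B j :|: C j = coset (a j) H, [disjoint B j & C j],
      exists x, B j = [set x; x + t] & exists x, C j = [set x; x + t]].

Let low := filter (fun i : 'I_(3 * d) => (i < d)%N) (enum 'I_(3 * d)).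
Let high := filter (fun j : 'I_(3 * d) => (d <= j)%N) (enum 'I_(3 * d)).
Let S' := [seq coset (a i) K | i <- low] ++ [seq coset (a i + t) K | i <- low]
       ++ [seq B j | j <- high] ++ [seq C j | j <- high].

Lemma size_low : size low = d.
Proof.
rewrite -(size_map val) /low -(filter_map val (fun n => (n < d)%N)) val_enum_ord.
by rewrite (filter_iota_ltn 0 (j := d)) ?size_iota //; lia.
Qed.

Lemma size_high : size high = (2 * d)%N.
Proof.
have := count_predC (fun i : 'I_(3 * d) => (i < d)%N) (enum 'I_(3 * d)).
rewrite -size_filter size_low size_enum_ord.
rewrite (eq_count (a2 := fun j : 'I_(3 * d) => (d <= j)%N)).
  by rewrite -size_filter -/high; lia.
by move=> j; rewrite /= -leqNgt.
Qed.

Let mem_high j : j \in high -> (d <= j)%N.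
Proof. by rewrite mem_filter => /andP[]. Qed.

Lemma sum_family (F : {set G} -> nat) :
  (\sum_(X <- S') F X = \sum_(i <- low) (F (coset (a i) K) + F (coset (a i + t)%R K))
                       + \sum_(j <- high) (F (B j) + F (C j)))%N.
Proof. by rewrite !big_cat !big_map !big_split /= !addnA. Qed.

Lemma mult_cover_family y : mult_cover S' y = (y \notin H).
Proof.
pose inH (i : 'I_(3 * d)) : nat := y \in coset (a i) H.
rewrite /mult_cover sum_family (eq_bigr inH) => [|i _]; last first.
  by rewrite /inH -cosetU_subgroup2 mem_setU_disjoint ?disjoint_cosets_subgroup2.
rewrite [X in (_ + X)%N](eq_big_seq inH) => [|j /mem_high jd]; last first.
  by rewrite /inH; have [<- BjCj _ _] := BC jd; rewrite mem_setU_disjoint.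
rewrite -(sum_mem_cosets (subgroup4_closed t4) _ aH a_inj); last first.
  by rewrite card_subgroup4 // cardG; lia.
rewrite [RHS](bigID (fun i : 'I_(3 * d) => (i < d)%N)) /= /low /high.
rewrite !big_filter !big_enum_cond /=.
by congr (_ + _)%N; apply: eq_bigl => i; rewrite leqNgt.
Qed.

Lemma size_family : size S' = (6 * d)%N.
Proof. by rewrite !size_cat !size_map size_low size_high; lia. Qed.

Lemma card_family : {in S', forall X : {set G}, #|X| = 2%N}.
Proof.
have t0 := order4_neq0 t2.
move=> X; rewrite !mem_cat => /or4P[] /mapP[j jS ->].
- by rewrite /K /subgroup2 coset_pair card_pair.
- by rewrite /K /subgroup2 coset_pair card_pair.
- by have [_ _ [x ->] _] := BC (mem_high jS); rewrite card_pair.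
- by have [_ _ _ [x ->]] := BC (mem_high jS); rewrite card_pair.
Qed.

Lemma mult_Int_family g : g != 0 -> mult_Int S' g = (4 * d * (g \in H))%N.
Proof.
move=> g0; rewrite /mult_Int sum_family -(nonzero_subgroup4_count t4 t2 g0).
rewrite (eq_bigr (fun=> 4 * (g == t *+ 2))%N) => [|i _]; last first.
  by rewrite /K /subgroup2 !coset_pair !mult_Delta_pair // oppr_mulrn2 //; case: (g == _).
rewrite [X in (_ + X)%N](eq_big_seq (fun=> 2 * ((g == t) + (g == t *+ 3)))%N); last first.
  move=> j /mem_high jd; have [_ _ [x ->] [y ->]] := BC jd.
  by rewrite !mult_Delta_pair ?(order4_neq0 t2) // oppr_order4 // addnn -mul2n.
rewrite !big_const_seq !count_predT size_low size_high !iter_addn_0; lia.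
Qed.

Theorem family_is_DPDF_EPDF :
  is_DPDF (12 * d + 4) (6 * d) 2 0 (4 * d) S' /\
  is_EPDF (12 * d + 4) (6 * d) 2 (12 * d - 4) (8 * d) S'.
Proof.
have PF : is_PF (12 * d + 4) (6 * d) 2 S'.
  rewrite -cardG -size_family.
  exact: (is_PF_cover (subgroup4_closed t4) mult_cover_family card_family).
have H0 : (0 : G) \in H by case: (subgroup4_closed t4).
have ExtInt g : g != 0 -> (mult_Ext S' g + mult_Int S' g =
    if g \in H then 12 * d else 12 * d - 4)%N.
  move=> g0; rewrite (mult_Ext_add_Int_cover (subgroup4_closed t4) mult_cover_family g0).
  by rewrite card_subgroup4 // cardG; case: ifP => _; lia.
have nonzero g : g \notin H -> g != 0 by apply: contraNneq => ->.
split; split; rewrite // (fam_union_cover mult_cover_family) => g; rewrite inE.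
- by move=> gH; rewrite mult_Int_family ?(negbTE gH) ?muln0 // nonzero.
- by move=> g0 /negPn gH; rewrite mult_Int_family // gH muln1.
- move=> gH; have g0 := nonzero g gH; have := ExtInt g g0.
  by rewrite mult_Int_family // (negbTE gH) muln0 addn0.
- move=> g0 /negPn gH; have := ExtInt g g0.
  by rewrite mult_Int_family // gH; lia.
Qed.

End Construction.

Theorem mainTheorem6 (d : nat)
  (a : 'I_(3 * d) -> 'Z_(12 * d + 4))
  (B C : 'I_(3 * d) -> {set 'Z_(12 * d + 4)}) :
  let t : 'Z_(12 * d + 4) := (3 * d + 1)%:R in
  let H : {set 'Z_(12 * d + 4)} :=
    [set 0; (3 * d + 1)%:R; (6 * d + 2)%:R; (9 * d + 3)%:R] in
  let K : {set 'Z_(12 * d + 4)} := [set 0; (6 * d + 2)%:R] in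
  (* a_1 + H, ..., a_{3d} + H are the cosets of H other than H, listed once each *)
  (forall i, coset (a i) H != H) ->
  injective (fun i => coset (a i) H) ->
  (* for d+1 <= j <= 3d: a_j + H is split into disjoint B_j, C_j, each {x, x + (3d+1)} *)
  (forall j : 'I_(3 * d), (d <= j)%N ->
     [/\ B j :|: C j = coset (a j) H, [disjoint B j & C j],
         exists x, B j = [set x; x + t] &
         exists x, C j = [set x; x + t]]) ->
  let S' : seq {set 'Z_(12 * d + 4)} :=
    [seq coset (a i) K | i <- filter (fun i : 'I_(3 * d) => (i < d)%N) (enum 'I_(3 * d))]
    ++ [seq coset (a i + t) K | i <- filter (fun i : 'I_(3 * d) => (i < d)%N) (enum 'I_(3 * d))]
    ++ [seq B j | j <- filter (fun j : 'I_(3 * d) => (d <= j)%N) (enum 'I_(3 * d))]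
    ++ [seq C j | j <- filter (fun j : 'I_(3 * d) => (d <= j)%N) (enum 'I_(3 * d))] in
  is_DPDF (12 * d + 4) (6 * d) 2 0 (4 * d) S' /\
  is_EPDF (12 * d + 4) (6 * d) 2 (12 * d - 4) (8 * d) S'.
Proof.
move=> t H K aH a_inj BC S'.
have p_gt1 : (1 < 12 * d + 4)%N by lia.
have tE k : t *+ k = ((3 * d + 1) * k)%:R by rewrite -mulrnA.
have t4 : t *+ 4 = 0.
  by rewrite tE (_ : (3 * d + 1) * 4 = 12 * d + 4)%N ?pchar_Zp //; lia.
have t2 : t *+ 2 != 0.
  by rewrite tE; apply/eqP => /(congr1 val); rewrite /= val_Zp_nat // modn_small; lia.
have cardG : #|'Z_(12 * d + 4)| = (12 * d + 4)%N by rewrite card_ord Zp_cast.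
have t2E : (6 * d + 2)%:R = t *+ 2 by rewrite tE; congr _%:R; lia.
have t3E : (9 * d + 3)%:R = t *+ 3 by rewrite tE; congr _%:R; lia.
have HE : H = subgroup4 t by rewrite /H t2E t3E.
rewrite HE in aH a_inj BC; rewrite /S' /K t2E.
exact: (family_is_DPDF_EPDF t4 t2 cardG aH a_inj BC).
Qed.
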